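(* Let $d>2$ and let $H$ be a $d\times d$ complex Hadamard matrix whose dephased form has an ER pair of columns or an ER pair of rows. Then $H$ is not isolated; that is, $H$ belongs to a continuous one-parameter family of complex Hadamard matrices containing matrices inequivalent to $H$.
   Context: A $d\times d$ complex Hadamard matrix has unimodular entries and pairwise orthogonal columns. Two complex Hadamard matrices $H_1,H_2$ are equivalent if $H_2=D_1P_1H_1P_2D_2$ for diagonal unitary $D_1,D_2$ and permutation matrices $P_1,P_2$. The dephased form of $H$ is the unique matrix $H'=D_1HD_2$ ($D_1,D_2$ diagonal unitary) whose first row and first column consist of $1$'s. Two distinct columns $C_A,C_B$ form an ER pair if $\overline{(C_A)_j}(C_B)_j\in\{1,-1\}$ for all $j$; ER pairs of rows are defined analogously. A complex Hadamard matrix is isolated if it does not belong to any continuous family of (pairwise inequivalent) complex Hadamard matrices. *)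

From HB Require Import structures.
From mathcomp Require Import all_boot all_order all_algebra.
From mathcomp Require Import fingroup perm.
From mathcomp Require Import complex.
From mathcomp Require Import all_classical all_reals topology normedtype.
Import numFieldNormedType.Exports.
Set Implicit Arguments. Unset Strict Implicit. Unset Printing Implicit Defensive.
Import Order.TTheory GRing.Theory Num.Theory.
Local Open Scope ring_scope.

Section Hadamard.
Variable R : realType.
Local Notation C := R[i].

Definition complex_hadamard (d : nat) (H : 'M[C]_d) : Prop :=
  (forall i j, `|H i j| = 1) /\
  (forall a b : 'I_d, a != b -> \sum_(k < d) conjc (H k a) * H k b = 0).

(* a diagonal unitary matrix is diag_mx u with unimodular entries u *)
Definition unimodular_row (d : nat) (u : 'rV[C]_d) : Prop :=
  forall i, `|u 0 i| = 1.

Definition hadamard_equiv (d : nat) (H1 H2 : 'M[C]_d) : Prop :=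
  exists (u v : 'rV[C]_d) (s1 s2 : 'S_d),
    [/\ unimodular_row u, unimodular_row v &
        H2 = diag_mx u *m perm_mx s1 *m H1 *m perm_mx s2 *m diag_mx v].

Definition dephased_form (d : nat) (H H' : 'M[C]_d) : Prop :=
  (exists u v : 'rV[C]_d,
      [/\ unimodular_row u, unimodular_row v & H' = diag_mx u *m H *m diag_mx v])
  /\ (forall i j : 'I_d, (val i = 0)%N \/ (val j = 0)%N -> H' i j = 1).

Definition ER_pair_cols (d : nat) (H : 'M[C]_d) (a b : 'I_d) : Prop :=
  a != b /\ forall j, conjc (H j a) * H j b = 1 \/ conjc (H j a) * H j b = -1.

Definition ER_pair_rows (d : nat) (H : 'M[C]_d) (a b : 'I_d) : Prop :=
  a != b /\ forall j, conjc (H a j) * H b j = 1 \/ conjc (H a j) * H b j = -1.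

Definition not_isolated (d : nat) (H : 'M[C]_d) : Prop :=
  exists F : R -> 'M[C]_d,
    [/\ forall i j, continuous (fun t : R => complex.Re (F t i j)),
        forall i j, continuous (fun t : R => complex.Im (F t i j)),
        F 0 = H,
        forall t, complex_hadamard (F t) &
        exists t, ~ hadamard_equiv (F t) H].

End Hadamard.

From HB Require Import structures.
From mathcomp Require Import all_boot all_order all_algebra.
From mathcomp Require Import fingroup perm complex.
From mathcomp Require Import all_classical all_reals topology normedtype.
From mathcomp Require Import ring lra.
Import numFieldNormedType.Exports.
Import Order.TTheory GRing.Theory Num.Theory.
Local Open Scope ring_scope.

(* Let columns a, b of H satisfy conj(H_ja) H_jb = +-c, and let S be the rows
   with sign -c.  Orthogonality of a and b makes S and its complement nonempty,
   and comparing the orthogonality of a and of b with a third column x shows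
   that the sums over S vanish on their own.  Hence multiplying the entries of
   columns a, b in the rows of S by any unimodular z keeps H Hadamard.  Along
   this family the Haagerup product H_ia conj(H_ka) H_kq conj(H_iq), with i in
   S, k not in S and q not in {a, b}, gets multiplied by z, so it takes
   infinitely many values, while the matrices equivalent to H only have
   finitely many such products.  Rows reduce to columns by transposition, and
   dephasing only turns the signs +-1 into +-c. *)

Lemma exists_third_index {n} (a b : 'I_n) : (2 < n)%N -> exists q : 'I_n, (q != a) && (q != b).
Proof.
move=> n2; case: (pickP [pred q : 'I_n | (q != a) && (q != b)]) => [q|none]; first by exists q.
suff: (#|[set: 'I_n]| <= #|[:: a; b]|)%N.
  by rewrite cardsT card_ord => /leq_trans/(_ (card_size _)); rewrite leqNgt n2.
apply/subset_leq_card/fintype.subsetP => q _.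
by move: (none q); rewrite !inE /= -negb_or => /negbFE.
Qed.

Section SignedSums.
Context {K : numDomainType} {I : finType}.
Implicit Types (P : pred I) (f : I -> K).

Lemma sum_scale_on {P} (z : K) {f} :
  \sum_j f j = 0 -> \sum_(j | P j) f j = 0 ->
  \sum_j (if P j then z * f j else f j) = 0.
Proof.
rewrite (bigID P) /= => + fP0; rewrite fP0 add0r => fNP0.
rewrite (bigID P) /= (eq_bigr (fun j => z * f j)) => [|j -> //].
by rewrite (eq_bigr f) => [|j /negbTE -> //]; rewrite -mulr_sumr fP0 fNP0 mulr0 addr0.
Qed.

Lemma sum_signed_split {P f} :
  \sum_j f j = 0 -> \sum_j (if P j then - f j else f j) = 0 ->
  \sum_(j | P j) f j = 0.
Proof.
rewrite (bigID P) /= => sum0; rewrite (bigID P) /=.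
rewrite (eq_bigr (fun j => - f j)) => [|j -> //].
rewrite (eq_bigr f) => [|j /negbTE -> //]; rewrite sumrN.
move: sum0; set A := \sum_(j | P j) f j; set B := \sum_(j | ~~ P j) f j => AB0 NAB0.
have : A *+ 2 = (A + B) - (- A + B) by rewrite mulr2n; ring.
by rewrite AB0 NAB0 subrr => /eqP; rewrite mulrn_eq0 => /eqP.
Qed.

Lemma sum_signs_nonempty P (c : K) :
  c != 0 -> (0 < #|I|)%N -> \sum_j (if P j then - c else c) = 0 ->
  (exists i, P i) /\ (exists k, ~~ P k).
Proof.
move=> c0 I0 sum0.
have sum_const e : e != 0 -> ~ (forall j, (if P j then - c else c) = e).
  move=> e0 signs; move: sum0; rewrite (eq_bigr (fun=> e)) // sumr_const => /eqP.
  by rewrite mulrn_eq0 (negbTE e0) orbF eqn0Ngt I0.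
split.
  case: (pickP P) => [i Pi|noP]; first by exists i.
  by exfalso; apply: (sum_const c c0) => j; rewrite noP.
case: (pickP (predC P)) => [k Pk|allP]; first by exists k.
exfalso; apply: (sum_const (- c)); first by rewrite oppr_eq0.
by move=> j; move: (allP j) => /= /negbFE ->.
Qed.

End SignedSums.

Section ComplexHadamard.
Context {R : realType}.
Local Notation C := R[i].

Lemma conjcM_self (z : C) : conjc z * z = `|z| ^+ 2.
Proof.
rewrite -add_Re2_Im2; case: z => x y /=.
by apply/eqP; rewrite eq_complex /=; apply/andP; split; apply/eqP; ring.
Qed.

Lemma conjcM_norm1 {z : C} : `|z| = 1 -> conjc z * z = 1.
Proof. by move=> z1; rewrite conjcM_self z1 expr1n. Qed.

Lemma norm1_neq0 {z : C} : `|z| = 1 -> z != 0.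
Proof. by move=> z1; rewrite -normr_eq0 z1 oner_eq0. Qed.

Lemma circle_den_neq0 (t : R) : 1 + t ^+ 2 != 0.
Proof. by rewrite gt_eqF // ltr_pwDl // sqr_ge0. Qed.

(* The rational parametrisation of the unit circle: unlike [t |-> e^(it)], it is
   injective on the naturals for elementary reasons. *)
Definition circle (t : R) : C :=
  Complex ((1 - t ^+ 2) / (1 + t ^+ 2)) ((2 * t) / (1 + t ^+ 2)).

Lemma conjcM_circle (t : R) : conjc (circle t) * circle t = 1.
Proof.
have den0 := circle_den_neq0 t.
by apply/eqP; rewrite eq_complex /=; apply/andP; split; apply/eqP; field.
Qed.

Lemma norm_circle (t : R) : `|circle t| = 1.
Proof. by apply/eqP; rewrite -(sqrp_eq1 (normr_ge0 _)) -conjcM_self conjcM_circle. Qed.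

Lemma circle0 : circle 0 = 1.
Proof.
by apply/eqP; rewrite eq_complex /= expr0n /= subr0 addr0 divr1 mulr0 mul0r !eqxx.
Qed.

Lemma circle_nat_inj : injective (fun n : nat => circle n%:R).
Proof.
move=> n m /(congr1 (@complex.Re R)) /=.
have n0 := circle_den_neq0 n%:R; have m0 := circle_den_neq0 m%:R.
move/eqP; rewrite eqr_div // => /eqP nm.
have /eqP : (n%:R : R) ^+ 2 = m%:R ^+ 2 by nra.
by rewrite -!natrX eqr_nat eqn_exp2r // => /eqP.
Qed.

Lemma continuous_sqr : continuous (fun t : R => t ^+ 2).
Proof. by move=> t; apply: (@continuousM _ _ id id); apply: cvg_id. Qed.

Lemma continuous_inv_circle_den : continuous (fun t : R => (1 + t ^+ 2)^-1).
Proof.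
move=> t; apply: (continuousV (s := fun t : R => 1 + t ^+ 2) (circle_den_neq0 t)).
exact: (continuousD (f := fun=> 1 : R) (@cst_continuous R R 1 t) (continuous_sqr t)).
Qed.

Lemma continuous_circle_Re : continuous (fun t => complex.Re (circle t)).
Proof.
move=> t; apply: (@continuousM _ _ (fun t : R => 1 - t ^+ 2)).
  exact: (continuousB (f := fun=> 1 : R) (@cst_continuous R R 1 t) (continuous_sqr t)).
exact: continuous_inv_circle_den.
Qed.

Lemma continuous_circle_Im : continuous (fun t => complex.Im (circle t)).
Proof.
move=> t; apply: (@continuousM _ _ (fun t : R => 2 * t)).
  by apply: (@continuousM _ _ (fun=> 2) id); [exact: cst_continuous | exact: cvg_id].
exact: continuous_inv_circle_den.
Qed.

Lemma continuous_Re_circleM (h : C) : continuous (fun t => complex.Re (circle t * h)).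
Proof.
case: h => x y t /=.
apply: (@continuousB _ _ _ (fun t => complex.Re (circle t) * x)
                           (fun t => complex.Im (circle t) * y)).
  by apply: (@continuousM _ _ _ (fun=> x)); [exact: continuous_circle_Re | exact: cst_continuous].
by apply: (@continuousM _ _ _ (fun=> y)); [exact: continuous_circle_Im | exact: cst_continuous].
Qed.

Lemma continuous_Im_circleM (h : C) : continuous (fun t => complex.Im (circle t * h)).
Proof.
case: h => x y t /=.
apply: (@continuousD _ _ _ (fun t => complex.Re (circle t) * y)
                           (fun t => complex.Im (circle t) * x)).
  by apply: (@continuousM _ _ _ (fun=> y)); [exact: continuous_circle_Re | exact: cst_continuous].
by apply: (@continuousM _ _ _ (fun=> x)); [exact: continuous_circle_Im | exact: cst_continuous].
Qed.

Section Dimension.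
Context {d : nat}.
Implicit Types H : 'M[C]_d.

Lemma complex_hadamard_row_orth {H : 'M[C]_d} {a b : 'I_d} :
  complex_hadamard H -> a != b -> \sum_k conjc (H a k) * H b k = 0.
Proof.
case=> H1 Horth ab.
have d0 : (d%:R : C) != 0 by rewrite pnatr_eq0 -lt0n (leq_ltn_trans _ (ltn_ord a)).
(* Orthogonal columns of norm sqrt d make d^-1 H^* a left, hence right, inverse of H. *)
pose Hinv : 'M[C]_d := \matrix_(i, j) (d%:R^-1 * conjc (H j i)).
have HinvH : Hinv *m H = 1%:M.
  apply/matrixP => i j; rewrite !mxE.
  under eq_bigr do rewrite mxE -mulrA.
  rewrite -mulr_sumr; case: eqP => [<-|/eqP ij]; last by rewrite Horth // mulr0.
  rewrite (eq_bigr (fun=> 1)) => [|k _]; last exact: conjcM_norm1.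
  by rewrite sumr_const card_ord mulVf.
have /matrixP/(_ b a) := mulmx1C HinvH.
rewrite !mxE eq_sym (negbTE ab).
under eq_bigr do rewrite mxE mulrCA.
move/eqP; rewrite -mulr_sumr mulf_eq0 invr_eq0 (negbTE d0) /= => /eqP sum0.
by rewrite -[RHS]sum0; apply: eq_bigr => k _; rewrite mulrC.
Qed.

Lemma complex_hadamard_tr (H : 'M[C]_d) :
  complex_hadamard H -> complex_hadamard H^T.
Proof.
move=> HH; split=> [i j|a b ab]; first by rewrite mxE; case: HH.
by rewrite -[RHS](complex_hadamard_row_orth HH ab); apply: eq_bigr => k _; rewrite !mxE.
Qed.

Lemma hadamard_equiv_tr (H1 H2 : 'M[C]_d) :
  hadamard_equiv H1 H2 -> hadamard_equiv H1^T H2^T.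
Proof.
case=> u [v] [s1] [s2] [u1 v1 ->]; exists v, u, s2^-1%g, s1^-1%g; split=> //.
by rewrite !trmx_mul !tr_diag_mx !tr_perm_mx !mulmxA.
Qed.

Lemma not_isolated_tr (H : 'M[C]_d) : not_isolated H^T -> not_isolated H.
Proof.
case=> F [FRe FIm F0 FH [t Ft]]; exists (fun t => (F t)^T); split.
- by move=> i j; under eq_fun do rewrite mxE; exact: FRe.
- by move=> i j; under eq_fun do rewrite mxE; exact: FIm.
- by rewrite F0 trmxK.
- by move=> s; apply: complex_hadamard_tr.
- by exists t => /hadamard_equiv_tr; rewrite trmxK.
Qed.

Lemma hadamard_equiv_entry H u v (s1 s2 : 'S_d) i j :
  (diag_mx u *m perm_mx s1 *m H *m perm_mx s2 *m diag_mx v) i j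
  = u 0 i * H (s1 i) (s2^-1%g j) * v 0 j.
Proof.
rewrite -(mulmxA (diag_mx u)) -row_permE.
have -> : perm_mx s2 = perm_mx (s2^-1)^-1 :> 'M[C]_d by rewrite invgK.
by rewrite -(mulmxA (diag_mx u)) -col_permE mul_mx_diag mxE mul_diag_mx !mxE.
Qed.

(* Haagerup's invariant: these products are permuted, but otherwise unchanged,
   by the equivalence of complex Hadamard matrices. *)
Definition haagerup H i j k l := H i j * conjc (H k j) * H k l * conjc (H i l).

Lemma haagerup_equiv {H1 H2} : hadamard_equiv H1 H2 ->
  exists s t : 'S_d, forall i j k l,
    haagerup H1 i j k l = haagerup H2 (s i) (t j) (s k) (t l).
Proof.
case=> u [v] [s1] [s2] [u1 v1 ->]; exists s1^-1%g, s2 => i j k l.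
rewrite /haagerup !hadamard_equiv_entry !permKV !permK !rmorphM /=.
set ui' := u 0 _; set uk' := u 0 _; set vj' := v 0 _; set vl' := v 0 _.
transitivity (conjc ui' * ui' * (conjc uk' * uk') * (conjc vj' * vj') * (conjc vl' * vl') *
  (H1 i j * conjc (H1 k j) * H1 k l * conjc (H1 i l))); last by ring.
by rewrite !(conjcM_norm1 (u1 _)) !(conjcM_norm1 (v1 _)) !mul1r.
Qed.

(* An equivalence class has finitely many Haagerup values, while the family
   below takes infinitely many. *)
Lemma not_isolated_haagerup_circle H (F : R -> 'M[C]_d) i j k l (w : C) :
  (forall a b, continuous (fun t => complex.Re (F t a b))) ->
  (forall a b, continuous (fun t => complex.Im (F t a b))) ->
  F 0 = H -> (forall t, complex_hadamard (F t)) -> w != 0 ->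
  (forall n : nat, haagerup (F n%:R) i j k l = circle n%:R * w) ->
  not_isolated H.
Proof.
move=> FRe FIm F0 FH w0 Fhaag; exists F; split=> //; apply/existsNP => Fequiv.
pose hH (q : 'I_d * 'I_d * 'I_d * 'I_d) := haagerup H q.1.1.1 q.1.1.2 q.1.2 q.2.
pose N := #|{: 'I_d * 'I_d * 'I_d * 'I_d}|.+1.
have: (size [seq (circle n%:R * w)%R | n <- iota 0 N] <= size (codom hH))%N.
  apply: uniq_leq_size.
    by rewrite map_inj_uniq ?iota_uniq // => n m /(mulIf w0); apply: circle_nat_inj.
  move=> _ /mapP [n _ ->]; have [s [t Ht]] := haagerup_equiv (Fequiv n%:R).
  by apply/codomP; exists (s i, t j, s k, t l); rewrite -Fhaag Ht.
by rewrite size_map size_iota size_codom ltnn.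
Qed.

Definition rephase_cols H (S : pred 'I_d) (a b : 'I_d) (t : R) : 'M[C]_d :=
  \matrix_(j, k) if S j && ((k == a) || (k == b)) then circle t * H j k else H j k.

Lemma rephase_cols0 H S a b : rephase_cols H S a b 0 = H.
Proof. by apply/matrixP => j k; rewrite mxE circle0 mul1r if_same. Qed.

Lemma continuous_rephase_cols_Re H S a b j k :
  continuous (fun t => complex.Re (rephase_cols H S a b t j k)).
Proof.
have -> : (fun t => complex.Re (rephase_cols H S a b t j k)) =
    (fun t => complex.Re (if S j && ((k == a) || (k == b)) then circle t * H j k else H j k)).
  by apply/funext => t; rewrite mxE.
by case: (S j && _); [exact: continuous_Re_circleM | exact: cst_continuous].
Qed.

Lemma continuous_rephase_cols_Im H S a b j k :
  continuous (fun t => complex.Im (rephase_cols H S a b t j k)).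
Proof.
have -> : (fun t => complex.Im (rephase_cols H S a b t j k)) =
    (fun t => complex.Im (if S j && ((k == a) || (k == b)) then circle t * H j k else H j k)).
  by apply/funext => t; rewrite mxE.
by case: (S j && _); [exact: continuous_Im_circleM | exact: cst_continuous].
Qed.

Definition split_orth H (S : pred 'I_d) (a b : 'I_d) :=
  forall p x, (p == a) || (p == b) -> ~~ ((x == a) || (x == b)) ->
    \sum_(j | S j) conjc (H j p) * H j x = 0.

Lemma rephase_cols_hadamard H S a b t :
  complex_hadamard H -> split_orth H S a b -> complex_hadamard (rephase_cols H S a b t).
Proof.
case=> H1 Horth Ssplit; split=> [j k|p r pr].
  by rewrite mxE; case: ifP => _; rewrite ?normrM ?norm_circle ?mul1r.
under eq_bigr do rewrite !mxE.
have [pab|pab] := boolP ((p == a) || (p == b)); have [rab|rab] := boolP ((r == a) || (r == b)).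
- rewrite -[RHS](Horth p r pr); apply: eq_bigr => j _; rewrite !andbT.
  by case: (S j); first rewrite rmorphM /= mulrACA conjcM_circle mul1r.
- rewrite -[RHS](sum_scale_on (conjc (circle t)) (Horth p r pr) (Ssplit p r pab rab)).
  apply: eq_bigr => j _; rewrite andbT andbF.
  by case: (S j); first rewrite rmorphM /= mulrA.
- have Ssplit' : \sum_(j | S j) conjc (H j p) * H j r = 0.
    apply/eqP; rewrite -conjc_eq0 rmorph_sum; apply/eqP.
    by rewrite -[RHS](Ssplit r p rab pab); apply: eq_bigr => j _; rewrite rmorphM /= conjcK mulrC.
  rewrite -[RHS](sum_scale_on (circle t) (Horth p r pr) Ssplit').
  apply: eq_bigr => j _; rewrite andbT andbF.
  by case: (S j); first rewrite mulrCA.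
- rewrite -[RHS](Horth p r pr); apply: eq_bigr => j _.
  by rewrite !andbF.
Qed.

Lemma not_isolated_rephase_cols H S a b i k q :
  complex_hadamard H -> split_orth H S a b ->
  S i -> ~~ S k -> ~~ ((q == a) || (q == b)) -> not_isolated H.
Proof.
move=> HH Ssplit Si Sk qab; have H1 := HH.1.
apply: (@not_isolated_haagerup_circle H (rephase_cols H S a b) i a k q (haagerup H i a k q)).
- exact: continuous_rephase_cols_Re.
- exact: continuous_rephase_cols_Im.
- exact: rephase_cols0.
- by move=> t; apply: rephase_cols_hadamard.
- by rewrite !mulf_neq0 ?conjc_eq0 ?norm1_neq0.
- by move=> n; rewrite /haagerup !mxE Si (negbTE Sk) (negbTE qab) eqxx /= !mulrA.
Qed.

Lemma not_isolated_ER_cols {H a b c} : (2 < d)%N -> complex_hadamard H -> a != b ->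
  `|c| = 1 -> (forall j, conjc (H j a) * H j b = c \/ conjc (H j a) * H j b = - c) ->
  not_isolated H.
Proof.
move=> d2 HH ab c1 ER; have [H1 Horth] := HH.
pose P : pred 'I_d := fun j => conjc (H j a) * H j b != c.
pose sign j := if P j then - c else c.
have ER_sign j : conjc (H j a) * H j b = sign j.
  by rewrite /sign /P; case: (ER j) => ->; rewrite ?eqxx // eqNr norm1_neq0.
have Hb j : H j b = sign j * H j a.
  by rewrite -ER_sign mulrAC conjcM_norm1 ?mul1r.
have [[i Pi] [k Pk]] : (exists i, P i) /\ (exists k, ~~ P k).
  apply: (sum_signs_nonempty P c (norm1_neq0 c1)); first by rewrite card_ord (ltn_trans _ d2).
  by rewrite -[RHS](Horth a b ab); apply: eq_bigr => j _; rewrite ER_sign.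
have [q qab] := exists_third_index a b d2.
apply: (@not_isolated_rephase_cols H P a b i k q) => //; last by rewrite negb_or.
move=> p x pab; rewrite negb_or => /andP [xa xb].
have Pa0 : \sum_(j | P j) conjc (H j a) * H j x = 0.
  apply: sum_signed_split; first by apply: Horth; rewrite eq_sym.
  have cJ0 : conjc c != 0 by rewrite conjc_eq0 norm1_neq0.
  apply: (mulfI cJ0); rewrite mulr0.
  rewrite -[RHS](Horth b x _) ?(eq_sym b) // mulr_sumr; apply: eq_bigr => j _.
  by rewrite Hb rmorphM /= /sign; case: (P j); rewrite /= ?rmorphN /=; ring.
case/orP: pab => /eqP -> //.
rewrite (eq_bigr (fun j => - conjc c * (conjc (H j a) * H j x))) => [|j Pj].
  by rewrite -mulr_sumr Pa0 mulr0.
by rewrite Hb rmorphM /= /sign (ifT _ _ Pj) rmorphN /= mulrA.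
Qed.

Lemma not_isolated_rescaled_ER_cols {H u v a b} : (2 < d)%N -> complex_hadamard H ->
  unimodular_row u -> unimodular_row v ->
  ER_pair_cols (diag_mx u *m H *m diag_mx v) a b -> not_isolated H.
Proof.
move=> d2 HH u1 v1 [ab ER]; pose c := v 0 a * conjc (v 0 b).
have c1 : `|c| = 1 by rewrite normrM normcJ !v1 mulr1.
apply: (not_isolated_ER_cols d2 HH ab c1) => j.
have entry k : (diag_mx u *m H *m diag_mx v) j k = u 0 j * H j k * v 0 k.
  by rewrite mul_mx_diag mxE mul_diag_mx mxE.
have cX : conjc c * (conjc (H j a) * H j b) = 1 \/ conjc c * (conjc (H j a) * H j b) = -1.
  have -> : conjc c * (conjc (H j a) * H j b) =
      conjc (u 0 j * H j a * v 0 a) * (u 0 j * H j b * v 0 b).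
    by rewrite /c !rmorphM /= conjcK -[LHS]mul1r -(conjcM_norm1 (u1 j)); ring.
  by rewrite -!entry; exact: ER.
have cc : c * conjc c = 1 by rewrite mulrC conjcM_norm1.
by case: cX => e; [left | right]; rewrite -[LHS]mul1r -cc -mulrA e ?mulr1 ?mulrN1.
Qed.

End Dimension.
End ComplexHadamard.

Theorem corollary1 (R : realType) (d : nat) (H : 'M[R[i]]_d) :
  (2 < d)%N ->
  complex_hadamard H ->
  (exists H' : 'M[R[i]]_d, dephased_form H H' /\
     ((exists a b, ER_pair_cols H' a b) \/ (exists a b, ER_pair_rows H' a b))) ->
  not_isolated H.
Proof.
move=> d2 HH [_ [[[u [v [u1 v1 ->]]] _] [[a [b ER]] | [a [b [ab ER]]]]]].
  exact: not_isolated_rescaled_ER_cols d2 HH u1 v1 ER.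
apply: not_isolated_tr.
apply: (not_isolated_rescaled_ER_cols d2 _ v1 u1); first exact: complex_hadamard_tr.
have -> : diag_mx v *m H^T *m diag_mx u = (diag_mx u *m H *m diag_mx v)^T.
  by rewrite !trmx_mul !tr_diag_mx mulmxA.
by split=> [|j]; [exact: ab | rewrite ![_^T _ _]mxE; exact: ER].
Qed.
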